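(* Let $p>0$ and let $(u_n)_{n\ge0}$ be a sequence in $E^1$ with partial sums $s_n=\sum_{k=0}^n u_k$. If the series $\sum u_n$ is $E_p$ summable to $\nu\in E^1$ and $\sqrt{n}\,D(u_n,\overline{0})\to0$ as $n\to\infty$, then $\sum u_n=\nu$, i.e. $D(s_n,\nu)\to0$.
   Context: $E^1$ denotes the set of fuzzy numbers: functions $u:\mathbb{R}\to[0,1]$ that are normal, fuzzy convex, upper semicontinuous, and have compact support $\overline{\{t:u(t)>0\}}$. For $\alpha\in(0,1]$ the $\alpha$-level set is $[u]_\alpha=\{t:u(t)\ge\alpha\}$ and $[u]_0=\overline{\{t:u(t)>0\}}$; each is a compact interval $[u^-_\alpha,u^+_\alpha]$. Addition and scalar multiplication are defined levelwise: $[u+v]_\alpha=[u^-_\alpha+v^-_\alpha,u^+_\alpha+v^+_\alpha]$ and $[ku]_\alpha=k[u]_\alpha$ for $k\in\mathbb{R}$. The metric is $D(u,v)=\sup_{\alpha\in[0,1]}\max\{|u^-_\alpha-v^-_\alpha|,|u^+_\alpha-v^+_\alpha|\}$. $\overline{0}$ is the fuzzy number equal to $1$ at $0$ and $0$ elsewhere. A series $\sum u_n$ of fuzzy numbers is $E_p$ summable to $\nu$ if its sequence of partial sums $(s_n)$ has Euler means $\frac{1}{(p+1)^n}\sum_{k=0}^n\binom{n}{k}p^{n-k}s_k$ converging to $\nu$ in $D$. *)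

From HB Require Import structures.
From mathcomp Require Import all_boot all_order all_algebra.
From mathcomp Require Import all_classical all_reals all_analysis.
Set Implicit Arguments. Unset Strict Implicit. Unset Printing Implicit Defensive.
Import Order.TTheory GRing.Theory Num.Theory.
Import numFieldNormedType.Exports.
Local Open Scope classical_set_scope.
Local Open Scope ring_scope.

Section Fuzzy.
Variable R : realType.

Definition is_fuzzy (u : R -> R) : Prop :=
  [/\ (forall t, 0 <= u t <= 1),
      (exists t, u t = 1),
      (forall x y l, 0 <= l <= 1 -> Num.min (u x) (u y) <= u (l * x + (1 - l) * y)),
      (forall t e, 0 < e -> \forall s \near t, u s < u t + e)
    &
      compact (closure [set t | 0 < u t])].

Definition level (u : R -> R) (a : R) : set R :=
  if a == 0 then closure [set t | 0 < u t] else [set t | a <= u t].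

Definition lo (u : R -> R) (a : R) : R := inf (level u a).
Definition hi (u : R -> R) (a : R) : R := sup (level u a).

Definition fdist (u v : R -> R) : R :=
  sup [set x | exists a, 0 <= a <= 1 /\
       x = Num.max `|lo u a - lo v a| `|hi u a - hi v a|].

(* The fuzzy set whose alpha-cuts (alpha in (0,1]) are the intervals [L a, U a] *)
Definition from_levels (L U : R -> R) : R -> R :=
  fun t => sup ([set 0] `|` [set a | 0 < a <= 1 /\ L a <= t <= U a]).

Definition fadd (u v : R -> R) : R -> R :=
  from_levels (fun a => lo u a + lo v a) (fun a => hi u a + hi v a).
Definition fscale (k : R) (u : R -> R) : R -> R :=
  from_levels (fun a => Num.min (k * lo u a) (k * hi u a))
              (fun a => Num.max (k * lo u a) (k * hi u a)).

Definition fzero : R -> R := fun t => if t == 0 then 1 else 0.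

Fixpoint fsum (F : nat -> R -> R) (n : nat) : R -> R :=
  match n with
  | 0 => F 0%N
  | m.+1 => fadd (fsum F m) (F m.+1)
  end.

Definition partial_sum (u : nat -> R -> R) (n : nat) : R -> R := fsum u n.

Definition euler_mean (p : R) (u : nat -> R -> R) (n : nat) : R -> R :=
  fscale (((p + 1) ^+ n)^-1)
    (fsum (fun k => fscale ('C(n, k)%:R * p ^+ (n - k)) (partial_sum u k)) n).

End Fuzzy.

(* On every level a in [0, 1] the endpoints of a sum, of a nonnegative multiple,
   and hence of an Euler mean of fuzzy numbers are the corresponding real
   combinations of the endpoints, and D is the supremum over a of the endpoint
   distances.  The theorem therefore reduces to the real Tauberian theorem for
   the Euler method, applied to the sequences (lo (u j) a)_j and (hi (u j) a)_j
   uniformly in a: all of them are dominated termwise by d_j = D(u_j, 0).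

   For real sequences, the Euler mean of (s_k) at n is the expectation of s_K
   for K binomial with parameters n and 1/(p+1).  With n = floor (m (p + 1)) the
   law of K is centred at m up to 1 and has variance at most m, while
   sqrt j * d_j -> 0 yields |s_k - s_m| <= dl + c (k - m)^2 with 2 m c <= 2 dl.
   Hence the Euler mean at n is within 3 dl of s_m. *)

From HB Require Import structures.
From mathcomp Require Import all_boot all_order all_algebra.
From mathcomp Require Import all_classical all_reals all_analysis.
From mathcomp Require Import ring lra zify.
Set Implicit Arguments.
Unset Strict Implicit.
Unset Printing Implicit Defensive.
Import Order.TTheory GRing.Theory Num.Theory.
Import numFieldNormedType.Exports.
Local Open Scope classical_set_scope.
Local Open Scope ring_scope.

Section BinomialMoments.
Variable R : comPzRingType.
Variables q r : R.
Hypothesis qr1 : q + r = 1.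

Definition binomw (n k : nat) : R := 'C(n, k)%:R * q ^+ k * r ^+ (n - k).

Lemma sum_binomw n : \sum_(k < n.+1) binomw n k = 1.
Proof.
have := exprDn r q n; rewrite addrC qr1 expr1n => ->.
by apply: eq_bigr => i _; rewrite /binomw -mulr_natl; ring.
Qed.

Lemma sum_mulk_binomw (f : nat -> R) n :
  \sum_(k < n.+2) f k * (k%:R * binomw n.+1 k) =
  n.+1%:R * q * \sum_(k < n.+1) f k.+1 * binomw n k.
Proof.
rewrite big_ord_recl /= mul0r mulr0 add0r big_distrr /=.
apply: eq_bigr => i _; rewrite /binomw /bump /= add1n subSS exprS.
have kC : i.+1%:R * 'C(n.+1, i.+1)%:R = n.+1%:R * 'C(n, i)%:R :> R.
  by rewrite -!natrM -mul_bin_diag.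
transitivity (f i.+1 * (i.+1%:R * 'C(n.+1, i.+1)%:R * q * q ^+ i * r ^+ (n - i))).
  by ring.
by rewrite kC; ring.
Qed.

Lemma binomw_mean n : \sum_(k < n.+1) k%:R * binomw n k = n%:R * q.
Proof.
case: n => [|n]; first by rewrite big_ord1 /= !mul0r.
have := sum_mulk_binomw (fun=> 1) n.
under eq_bigr do rewrite mul1r; move=> ->.
by under eq_bigr do rewrite mul1r; rewrite sum_binomw mulr1.
Qed.

Lemma binomw_moment2 n :
  \sum_(k < n.+1) k%:R ^+ 2 * binomw n k = n%:R * q * (n%:R * q + r).
Proof.
case: n => [|n]; first by rewrite big_ord1 expr2 !mul0r.
have := sum_mulk_binomw (fun k => k%:R) n.
under eq_bigr do rewrite mulrA -expr2; move=> ->.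
under eq_bigr do rewrite -natr1 mulrDl mul1r.
rewrite big_split /= binomw_mean sum_binomw -natr1.
have -> : r = 1 - q by rewrite -qr1; ring.
ring.
Qed.

Lemma binomw_sq_dev n (m : R) :
  \sum_(k < n.+1) binomw n k * (k%:R - m) ^+ 2 = (n%:R * q - m) ^+ 2 + n%:R * q * r.
Proof.
transitivity (\sum_(k < n.+1) k%:R ^+ 2 * binomw n k
  - 2 * m * \sum_(k < n.+1) k%:R * binomw n k + m ^+ 2 * \sum_(k < n.+1) binomw n k).
  rewrite !big_distrr /= -sumrB -big_split /=; apply: eq_bigr => i _; ring.
rewrite binomw_moment2 binomw_mean sum_binomw; ring.
Qed.

End BinomialMoments.

Section BinomialAverage.
Variable R : realType.
Variables q r : R.
Hypotheses (qr1 : q + r = 1) (q_ge0 : 0 <= q) (r_ge0 : 0 <= r).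

Lemma binomw_ge0 n k : 0 <= binomw q r n k.
Proof. by rewrite /binomw !mulr_ge0 ?exprn_ge0. Qed.

(* Chebyshev-type estimate: a quadratic bound on the oscillation of [s] around
   [m] turns into a bound through the second moment of the binomial law. *)
Lemma binomw_avg_dist_le (s : nat -> R) n m (dl c : R) : 0 <= c ->
  (forall k, `|s k - s m| <= dl + c * (k%:R - m%:R) ^+ 2) ->
  `|\sum_(k < n.+1) binomw q r n k * s k - s m| <=
    dl + c * ((n%:R * q - m%:R) ^+ 2 + n%:R * q * r).
Proof.
move=> c_ge0 s_osc.
have -> : \sum_(k < n.+1) binomw q r n k * s k - s m =
    \sum_(k < n.+1) binomw q r n k * (s k - s m).
  rewrite -[X in _ - X]mul1r -(sum_binomw qr1 n) big_distrl -sumrB /=.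
  by apply: eq_bigr => k _; ring.
apply: le_trans (ler_norm_sum _ _ _) _.
under eq_bigr do rewrite normrM ger0_norm ?binomw_ge0 //.
apply: le_trans (ler_sum _ (fun (k : 'I_n.+1) _ => ler_wpM2l (binomw_ge0 n k) (s_osc k))) _.
under eq_bigr do rewrite mulrDr mulrCA.
rewrite big_split /= -big_distrl -big_distrr /= sum_binomw // binomw_sq_dev //.
by rewrite mul1r.
Qed.

End BinomialAverage.

Section PartialSums.
Variable R : realType.
Implicit Types (x d : nat -> R) (K dl : R).

Definition psum x k := \sum_(j < k.+1) x j.

Lemma psum_dist_le x (G : nat -> R) k m : (k <= m)%N ->
    (forall j, (k <= j < m)%N -> `|x j.+1| <= G j.+1 - G j) ->
  `|psum x m - psum x k| <= G m - G k.
Proof.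
elim: m => [|m IHm] km xG.
  by move: km; rewrite leqn0 => /eqP ->; rewrite !subrr normr0.
have [mk|km'] := ltnP m k.
  have -> : k = m.+1 by lia.
  by rewrite !subrr normr0.
rewrite /psum big_ord_recr /= -/(psum x m).
have IH := IHm km' (fun j jm => xG j ltac:(lia)).
have xm := xG m ltac:(lia).
rewrite addrAC; apply: le_trans (ler_normD _ _) _.
have -> : G m.+1 - G k = (G m - G k) + (G m.+1 - G m) by ring.
exact: lerD.
Qed.

(* [sqrt (j + 1) - sqrt j >= 1 / (2 sqrt (j + 1))] *)
Lemma le_sqrt_increment (y K : R) (j : nat) : 0 <= y ->
  Num.sqrt j.+1%:R * y <= K ->
  y <= 2 * K * Num.sqrt j.+1%:R - 2 * K * Num.sqrt j%:R.
Proof.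
move=> y_ge0 yK.
set t := Num.sqrt j.+1%:R; set s := Num.sqrt j%:R.
have t2 : t * t = j%:R + 1 by rewrite /t -expr2 sqr_sqrtr // -natr1.
have s2 : s * s = j%:R by rewrite /s -expr2 sqr_sqrtr.
have s_ge0 : 0 <= s by apply: sqrtr_ge0.
have t_ge0 : 0 <= t by apply: sqrtr_ge0.
have st : s <= t by rewrite /s /t ler_sqrt // ler_nat.
have inc : 1 <= 2 * t * (t - s) by nra.
have h1 : 0 <= y * (2 * t * (t - s) - 1) by rewrite mulr_ge0 // subr_ge0.
have h2 : 0 <= (K - t * y) * (t - s) by rewrite mulr_ge0 // subr_ge0.
nra.
Qed.

Lemma psum_dist_le_lin x (B : R) a b : (a <= b)%N ->
    (forall j, (a < j <= b)%N -> `|x j| <= B) ->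
  `|psum x b - psum x a| <= (b%:R - a%:R) * B.
Proof.
move=> ab xB; rewrite mulrBl; apply: (@psum_dist_le x (fun i => i%:R * B)) ab _ => j aj.
by rewrite -mulrBl -natr1 addrAC subrr add0r mul1r xB.
Qed.

Lemma le_sqrt_ratio_of_near (y dl : R) (j m : nat) : 0 <= y -> (0 < m)%N ->
  (m <= j.*2)%N -> Num.sqrt j%:R * y <= dl -> y <= Num.sqrt (2 * dl ^+ 2 / m%:R).
Proof.
move=> y_ge0 m_gt0 mj jy.
have m_gt0R : 0 < m%:R :> R by rewrite ltr0n.
have j_gt0 : 0 < j%:R :> R by rewrite ltr0n; lia.
have dl_ge0 : 0 <= dl by apply: le_trans jy; rewrite mulr_ge0 ?sqrtr_ge0.
have jy2 : j%:R * y ^+ 2 <= dl ^+ 2.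
  rewrite -[j%:R]sqr_sqrtr ?ler0n // -exprMn.
  by rewrite ler_pXn2r ?nnegrE ?mulr_ge0 ?sqrtr_ge0.
have mj' : m%:R <= 2 * j%:R :> R by rewrite -natrM ler_nat; lia.
rewrite -(ger0_norm y_ge0) -sqrtr_sqr ler_sqrt ?divr_ge0 ?mulr_ge0 ?sqr_ge0 ?ler0n //.
rewrite ler_pdivlMr //.
have : y ^+ 2 * m%:R <= y ^+ 2 * (2 * j%:R) by rewrite ler_wpM2l ?sqr_ge0.
lra.
Qed.

Section Increments.
Variables (x d : nat -> R).
Hypotheses (d_ge0 : forall j, 0 <= d j) (x_le_d : forall j, `|x j| <= d j).

Lemma psum_dist_le_sqrt K k m : (k <= m)%N ->
    (forall j, Num.sqrt j%:R * d j <= K) ->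
  `|psum x m - psum x k| <= 2 * K * Num.sqrt m%:R.
Proof.
move=> km dK.
have K_ge0 : 0 <= K by apply: le_trans (dK 0%N); rewrite mulr_ge0 ?sqrtr_ge0.
apply: le_trans (@psum_dist_le x (fun j => 2 * K * Num.sqrt j%:R) _ _ km _) _.
  move=> j _; apply: le_trans (x_le_d _) _; exact: le_sqrt_increment.
by rewrite lerBlDr lerDl !mulr_ge0 ?sqrtr_ge0.
Qed.

(* near [m] the increments are [O(dl / sqrt m)]; AM-GM turns the resulting
   linear bound into a quadratic one *)
Lemma psum_dist_near dl k m : 0 < dl -> (0 < m)%N -> (m <= k.*2)%N ->
    (forall j, (m <= j.*2)%N -> Num.sqrt j%:R * d j <= dl) ->
  `|psum x k - psum x m| <= dl + dl / (2 * m%:R) * (k%:R - m%:R) ^+ 2.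
Proof.
move=> dl_gt0 m_gt0 mk dl_bound.
have dl_ge0 := ltW dl_gt0.
have m_gt0R : 0 < m%:R :> R by rewrite ltr0n.
set B := Num.sqrt (2 * dl ^+ 2 / m%:R).
have mB2 : m%:R * B ^+ 2 = 2 * dl ^+ 2.
  rewrite sqr_sqrtr ?divr_ge0 ?mulr_ge0 ?sqr_ge0 ?ler0n //.
  by rewrite mulrC divfK ?gt_eqF.
have lin a b : (a <= b)%N -> (m <= a.*2)%N -> `|psum x b - psum x a| <= (b%:R - a%:R) * B.
  move=> ab ma; apply: psum_dist_le_lin => // j /andP[aj _].
  apply: le_trans (x_le_d j) (le_sqrt_ratio_of_near (d_ge0 j) m_gt0 _ (dl_bound j _)).
    by apply: leq_trans ma _; rewrite leq_double ltnW.
  by apply: leq_trans ma _; rewrite leq_double ltnW.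
have zB : `|psum x k - psum x m| <= `|k%:R - m%:R| * B.
  have [mk'|km] := leqP m k.
    rewrite (@ger0_norm _ (k%:R - m%:R)) ?subr_ge0 ?ler_nat //.
    by apply: (lin m k mk'); rewrite -addnn leq_addr.
  rewrite distrC (distrC k%:R) (@ger0_norm _ (m%:R - k%:R)); last first.
    by rewrite subr_ge0 ler_nat ltnW.
  exact: (lin k m (ltnW km) mk).
apply: le_trans zB _.
set z := k%:R - m%:R.
rewrite -real_normK ?num_real //.
suff : 2 * m%:R * dl * (`|z| * B) <= 2 * m%:R * dl * (dl + dl / (2 * m%:R) * `|z| ^+ 2).
  by rewrite ler_pM2l ?mulr_gt0.
have -> : 2 * m%:R * dl * (dl + dl / (2 * m%:R) * `|z| ^+ 2) =
    (dl * `|z|) ^+ 2 + m%:R * (m%:R * B ^+ 2).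
  by rewrite mB2; field; rewrite gt_eqF.
rewrite -subr_ge0.
have -> : (dl * `|z|) ^+ 2 + m%:R * (m%:R * B ^+ 2) - 2 * m%:R * dl * (`|z| * B) =
    (dl * `|z| - m%:R * B) ^+ 2 by ring.
exact: sqr_ge0.
Qed.

Lemma psum_dist_far K k m : (0 < m)%N -> (k.*2 < m)%N ->
    (forall j, Num.sqrt j%:R * d j <= K) ->
  `|psum x k - psum x m| <= 8 * K * Num.sqrt m%:R / m%:R ^+ 2 * (k%:R - m%:R) ^+ 2.
Proof.
move=> m_gt0 km dK.
have m_gt0R : 0 < m%:R :> R by rewrite ltr0n.
have K_ge0 : 0 <= K by apply: le_trans (dK 0%N); rewrite mulr_ge0 ?sqrtr_ge0.
rewrite distrC; apply: le_trans (psum_dist_le_sqrt (ltnW (leq_ltn_trans _ km)) dK) _.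
  by rewrite -addnn leq_addr.
have far : m%:R ^+ 2 <= 4 * (k%:R - m%:R) ^+ 2 :> R.
  have : m%:R < 2 * (m%:R - k%:R) :> R.
    by move: km; rewrite -mul2n -(ltr_nat R) natrM; lra.
  nra.
rewrite [leRHS]mulrAC ler_pdivlMr ?exprn_gt0 //.
have KsK := mulr_ge0 K_ge0 (sqrtr_ge0 m%:R).
have := ler_wpM2l KsK far.
lra.
Qed.

Lemma psum_dist_quadratic dl K k m : 0 < dl -> (0 < m)%N ->
    (forall j, Num.sqrt j%:R * d j <= K) ->
    (forall j, (m <= j.*2)%N -> Num.sqrt j%:R * d j <= dl) ->
  `|psum x k - psum x m| <=
    dl + (dl / (2 * m%:R) + 8 * K * Num.sqrt m%:R / m%:R ^+ 2) * (k%:R - m%:R) ^+ 2.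
Proof.
move=> dl_gt0 m_gt0 dK dl_bound.
have K_ge0 : 0 <= K by apply: le_trans (dK 0%N); rewrite mulr_ge0 ?sqrtr_ge0.
have z2_ge0 := sqr_ge0 (k%:R - m%:R : R).
have c1_ge0 : 0 <= dl / (2 * m%:R) by rewrite divr_ge0 ?mulr_ge0 ?ler0n ?(ltW dl_gt0).
have c2_ge0 : 0 <= 8 * K * Num.sqrt m%:R / m%:R ^+ 2.
  by rewrite divr_ge0 ?mulr_ge0 ?sqrtr_ge0 ?exprn_ge0 ?ler0n.
rewrite mulrDl.
have [mk|km] := leqP m k.*2.
- have := psum_dist_near dl_gt0 m_gt0 mk dl_bound.
  have := mulr_ge0 c2_ge0 z2_ge0; lra.
- have := psum_dist_far m_gt0 km dK.
  have := mulr_ge0 c1_ge0 z2_ge0; lra.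
Qed.

End Increments.
End PartialSums.

Section EulerTauberian.
Variable R : realType.

Definition euler_avg (p : R) (s : nat -> R) n :=
  ((p + 1) ^+ n)^-1 * \sum_(k < n.+1) ('C(n, k)%:R * p ^+ (n - k)) * s k.

Lemma euler_avgE p s n :
  euler_avg p s n = \sum_(k < n.+1) binomw (p + 1)^-1 (p * (p + 1)^-1) n k * s k.
Proof.
rewrite /euler_avg big_distrr /=; apply: eq_bigr => k _.
have qn : (p + 1)^-1 ^+ n = (p + 1)^-1 ^+ k * (p + 1)^-1 ^+ (n - k).
  by rewrite -exprD subnKC // -ltnS ltn_ord.
by rewrite /binomw exprMn -exprVn qn; ring.
Qed.

Lemma cvg0_eventually_lt (f : nat -> R) : f @ \oo --> 0 ->
  forall e, 0 < e -> exists N, forall n, (N <= n)%N -> `|f n| < e.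
Proof.
move=> /cvgrPdist_lt f0 e e_gt0; have [N _ fN] := f0 e e_gt0.
by exists N => n /fN; rewrite sub0r normrN.
Qed.

Lemma cvg_bounded_above (f : nat -> R) (l : R) : f @ \oo --> l ->
  exists K, forall n, f n <= K.
Proof.
move=> /cvgP /cvg_seq_bounded [M [_ fM]]; exists (M + 1) => n.
have /(_ n I) fn := fM (M + 1) ltac:(by rewrite ltrDl).
exact: le_trans (ler_norm _) fn.
Qed.

(* Choosing [n = floor (m (p + 1))] centres the binomial law at [m] up to [1]. *)
Lemma euler_index_bounds (p : R) (m : nat) : 0 <= p ->
  let n := Num.truncn (m%:R * (p + 1)) in
  (m <= n)%N /\
  (n%:R * (p + 1)^-1 - m%:R) ^+ 2 + n%:R * (p + 1)^-1 * (p * (p + 1)^-1) <= 1 + m%:R.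
Proof.
move=> p_ge0 n.
have p1_gt0 : 0 < p + 1 by rewrite ltr_wpDl.
have [n_le n_gt] : n%:R <= m%:R * (p + 1) /\ m%:R * (p + 1) < n.+1%:R.
  by apply/andP; apply: truncn_itv; rewrite mulr_ge0 ?ler0n ?ltW.
set q := (p + 1)^-1.
have q_gt0 : 0 < q by rewrite invr_gt0.
have pq1 : p * q = 1 - q by rewrite /q; field; rewrite gt_eqF.
have q_le1 : q <= 1 by rewrite /q invr_le1 ?unitfE ?gt_eqF // lerDr.
have nq_le : n%:R * q <= m%:R by rewrite ler_pdivrMr.
have nq_gt : m%:R < n%:R * q + q by rewrite -[X in _ + X]mul1r -mulrDl natr1 ltr_pdivlMr.
have nq_ge0 : 0 <= n%:R * q by rewrite mulr_ge0 ?ler0n ?ltW.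
split.
  rewrite -ltnS -(ltr_nat R); apply: le_lt_trans n_gt.
  by rewrite ler_peMr ?ler0n // lerDr.
have dev : (n%:R * q - m%:R) ^+ 2 <= 1.
  by rewrite -sqrrN opprB expr2 -[1](mulr1 1) ler_pM ?subr_ge0 //; lra.
have var : n%:R * q * (p * q) <= n%:R * q.
  by rewrite pq1 ler_piMr // ?subr_ge0 ?gerBl ?ltW.
lra.
Qed.

Lemma quadratic_coef_le (dl K : R) (m : nat) : 0 < dl -> (0 < m)%N ->
    (16 * K / dl) ^+ 2 <= m%:R ->
  2 * m%:R * (dl / (2 * m%:R) + 8 * K * Num.sqrt m%:R / m%:R ^+ 2) <= 2 * dl.
Proof.
move=> dl_gt0 m_gt0 Tm.
have m_gt0R : 0 < m%:R :> R by rewrite ltr0n.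
have sm_gt0 : 0 < Num.sqrt m%:R :> R by rewrite sqrtr_gt0.
have smm : Num.sqrt m%:R * Num.sqrt m%:R = m%:R :> R by rewrite -expr2 sqr_sqrtr ?ltW.
have T_le : 16 * K / dl <= Num.sqrt m%:R.
  by apply: le_trans (ler_norm _) _; rewrite -sqrtr_sqr ler_sqrt ?ler0n.
have -> : 2 * m%:R * (dl / (2 * m%:R) + 8 * K * Num.sqrt m%:R / m%:R ^+ 2) =
    dl + 16 * K * Num.sqrt m%:R / m%:R by field; rewrite gt_eqF.
suff : 16 * K * Num.sqrt m%:R / m%:R <= dl by lra.
rewrite ler_pdivrMr // -[in leRHS]smm mulrA ler_pM2r //.
by rewrite -ler_pdivrMl // mulrC.
Qed.

Lemma euler_avg_psum_dist (p dl K : R) (x d : nat -> R) (m : nat) : 0 <= p ->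
    0 < dl -> (0 < m)%N -> (forall j, 0 <= d j) -> (forall j, `|x j| <= d j) ->
    (forall j, Num.sqrt j%:R * d j <= K) ->
    (forall j, (m <= j.*2)%N -> Num.sqrt j%:R * d j <= dl) ->
    (16 * K / dl) ^+ 2 <= m%:R ->
  `|euler_avg p (psum x) (Num.truncn (m%:R * (p + 1))) - psum x m| <= 3 * dl.
Proof.
move=> p_ge0 dl_gt0 m_gt0 d_ge0 xd dK dl_bound Tm.
have [_ var_le] := euler_index_bounds m p_ge0.
set n := Num.truncn _ in var_le *; set q := (p + 1)^-1 in var_le *.
have p1_gt0 : 0 < p + 1 by rewrite ltr_wpDl.
have qr1 : q + p * q = 1 by rewrite /q; field; rewrite gt_eqF.
have q_ge0 : 0 <= q by rewrite invr_ge0 ltW.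
set c := dl / (2 * m%:R) + 8 * K * Num.sqrt m%:R / m%:R ^+ 2.
have c_ge0 : 0 <= c.
  have K_ge0 : 0 <= K by apply: le_trans (dK 0%N); rewrite mulr_ge0 ?sqrtr_ge0.
  by rewrite addr_ge0 ?divr_ge0 ?mulr_ge0 ?sqrtr_ge0 ?exprn_ge0 ?ler0n ?(ltW dl_gt0).
have c_var : c * ((n%:R * q - m%:R) ^+ 2 + n%:R * q * (p * q)) <= 2 * dl.
  apply: le_trans _ (quadratic_coef_le dl_gt0 m_gt0 Tm).
  apply: le_trans (ler_wpM2l c_ge0 var_le) _.
  rewrite mulrC ler_wpM2r //; have : 1 <= m%:R :> R by rewrite ler1n.
  lra.
rewrite euler_avgE -/q.
have := binomw_avg_dist_le qr1 q_ge0 (mulr_ge0 p_ge0 q_ge0) n c_ge0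
  (fun k => psum_dist_quadratic d_ge0 xd k dl_gt0 m_gt0 dK dl_bound).
lra.
Qed.

Theorem euler_tauberian_uniform (p : R) (d e : nat -> R) : 0 <= p ->
    (forall j, 0 <= d j) -> e @ \oo --> 0 ->
    (fun n => Num.sqrt n%:R * d n) @ \oo --> 0 ->
  forall eps : R, 0 < eps -> exists M, forall m, (M <= m)%N ->
  forall (x : nat -> R) (l : R), (forall j, `|x j| <= d j) ->
    (forall n, `|euler_avg p (psum x) n - l| <= e n) ->
  `|psum x m - l| <= eps.
Proof.
move=> p_ge0 d_ge0 e0 sd0 eps eps_gt0.
have dl_gt0 : 0 < eps / 4 by rewrite divr_gt0.
have [Ne eNe] := cvg0_eventually_lt e0 dl_gt0.
have [J sdJ] := cvg0_eventually_lt sd0 dl_gt0.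
have [K sdK] := cvg_bounded_above sd0.
exists (maxn (maxn 1 J.*2) (maxn Ne (Num.truncn ((16 * K / (eps / 4)) ^+ 2)).+1)).
move=> m; rewrite !geq_max => /andP[/andP[m_gt0 Jm] /andP[Nem Tm]] x l xd euler_l.
have dl_bound j : (m <= j.*2)%N -> Num.sqrt j%:R * d j <= eps / 4.
  move=> mj; have /sdJ : (J <= j)%N by rewrite -leq_double (leq_trans Jm mj).
  by rewrite ger0_norm ?mulr_ge0 ?sqrtr_ge0 // => /ltW.
have T_le_m : (16 * K / (eps / 4)) ^+ 2 <= m%:R.
  have /andP[_ /ltW T_lt] := truncn_itv (sqr_ge0 (16 * K / (eps / 4))).
  by apply: le_trans T_lt _; rewrite ler_nat.
have [mn _] := euler_index_bounds m p_ge0.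
have := euler_avg_psum_dist p_ge0 dl_gt0 m_gt0 d_ge0 xd sdK dl_bound T_le_m.
have := euler_l (Num.truncn (m%:R * (p + 1))).
have := eNe _ (leq_trans Nem mn); move: (ler_norm (e (Num.truncn (m%:R * (p + 1))))).
set A := euler_avg _ _ _; have := ler_distD A (psum x m) l.
rewrite (distrC (psum x m) A); lra.
Qed.

End EulerTauberian.

Section RealSets.
Variable R : realType.

Lemma nbhs_dist_lt (x e : R) : 0 < e -> nbhs x (fun y => `|x - y| < e).
Proof. by move=> e_gt0; apply/nbhs_ballP; exists e. Qed.

Lemma nbhs_distP (x : R) (B : set R) : nbhs x B ->
  exists2 e, 0 < e & forall y, `|x - y| < e -> B y.
Proof. by move=> /nbhs_ballP[e e_gt0 xB]; exists e. Qed.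

Lemma compact_norm_bounded (A : set R) : compact A ->
  exists M, forall x, A x -> `|x| <= M.
Proof.
move=> /compact_bounded[M [_ AM]]; exists (M + 1) => x Ax.
by apply: (AM (M + 1)) => //; rewrite ltrDl.
Qed.

Lemma inf_minimum (A : set R) x : A x -> (forall y, A y -> x <= y) -> inf A = x.
Proof.
move=> Ax xA; apply/eqP; rewrite eq_le; apply/andP; split.
  by apply: (ge_inf _ Ax); exists x.
by apply: lb_le_inf => //; exists x.
Qed.

Lemma sup_maximum (A : set R) x : A x -> (forall y, A y -> y <= x) -> sup A = x.
Proof.
move=> Ax Ax'; apply/eqP; rewrite eq_le; apply/andP; split.
  by apply: ge_sup => //; exists x.
by apply: (ub_le_sup _ Ax); exists x.
Qed.

End RealSets.

Section LevelEndpoints.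
Variable R : realType.
Implicit Types (f g L U : R -> R).

(* Together with monotonicity these say: left continuous on ]0, 1] and right
   continuous at 0, the regularity of the endpoints of the level sets of a
   fuzzy number (Goetschel-Voxman). *)
Definition nondecreasing01 f := forall a b, 0 <= a -> a <= b -> b <= 1 -> f a <= f b.
Definition left_continuous01 f := forall a, 0 < a -> a <= 1 -> forall e, 0 < e ->
  exists b, [/\ 0 <= b, b < a & f a - e < f b].
Definition right_continuous0 f := forall e, 0 < e ->
  exists b, [/\ 0 < b, b <= 1 & f b < f 0 + e].

Definition level_endpoint f :=
  [/\ nondecreasing01 f, left_continuous01 f & right_continuous0 f].

Definition level_endpoints L U := [/\ level_endpoint L, level_endpoint (fun a => - U a)
  & forall a, 0 <= a -> a <= 1 -> L a <= U a].

Definition regular_levels (u : R -> R) := level_endpoints (lo u) (hi u).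

Lemma level_endpoint_ext f g : (forall a, 0 <= a -> a <= 1 -> f a = g a) ->
  level_endpoint f -> level_endpoint g.
Proof.
move=> fg [f_mono f_lc f_rc]; split.
- move=> a b a0 ab b1; rewrite -!fg //; [exact: f_mono | lra | lra].
- move=> a a0 a1 e e0; have [b [b0 ba fb]] := f_lc a a0 a1 e e0.
  by exists b; split => //; rewrite -!fg //; lra.
- move=> e e0; have [b [b0 b1 fb]] := f_rc e e0.
  by exists b; split => //; rewrite -!fg //; lra.
Qed.

Lemma level_endpoint_cst c : level_endpoint (fun=> c).
Proof.
split=> [//|a a0 a1 e e0|e e0]; first by exists 0; split => //; lra.
by exists 1; split => //; lra.
Qed.

Lemma level_endpointD f g : level_endpoint f -> level_endpoint g ->
  level_endpoint (fun a => f a + g a).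
Proof.
move=> [f_mono f_lc f_rc] [g_mono g_lc g_rc].
split=> [a b a0 ab b1|a a0 a1 e e0|e e0]; first exact: lerD (f_mono _ _ _ _ _) (g_mono _ _ _ _ _).
- have e2 : 0 < e / 2 by rewrite divr_gt0.
  have [b1 [b10 b1a fb1]] := f_lc a a0 a1 _ e2.
  have [b2 [b20 b2a gb2]] := g_lc a a0 a1 _ e2.
  have ba : Num.max b1 b2 <= 1 by apply: ltW; rewrite gt_max (lt_le_trans b1a) ?(lt_le_trans b2a).
  exists (Num.max b1 b2); split; rewrite ?le_max ?b10 ?gt_max ?b1a ?b2a //.
  have b1m : b1 <= Num.max b1 b2 by rewrite le_max lexx.
  have b2m : b2 <= Num.max b1 b2 by rewrite le_max lexx orbT.
  have := f_mono _ _ b10 b1m ba; have := g_mono _ _ b20 b2m ba.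
  lra.
- have e2 : 0 < e / 2 by rewrite divr_gt0.
  have [b1 [b10 b11 fb1]] := f_rc _ e2.
  have [b2 [b20 b21 gb2]] := g_rc _ e2.
  have b0 : 0 <= Num.min b1 b2 by rewrite le_min !ltW.
  exists (Num.min b1 b2); split; rewrite ?lt_min ?b10 ?ge_min ?b11 //.
  have mb1 : Num.min b1 b2 <= b1 by rewrite ge_min lexx.
  have mb2 : Num.min b1 b2 <= b2 by rewrite ge_min lexx orbT.
  have := f_mono _ _ b0 mb1 b11; have := g_mono _ _ b0 mb2 b21.
  lra.
Qed.

Lemma level_endpointZ k f : 0 <= k -> level_endpoint f -> level_endpoint (fun a => k * f a).
Proof.
rewrite le_eqVlt => /predU1P[<- _|k_gt0 [f_mono f_lc f_rc]].
  by apply: level_endpoint_ext (level_endpoint_cst 0) => a _ _; rewrite mul0r.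
split=> [a b a0 ab b1|a a0 a1 e e0|e e0]; first by rewrite ler_pM2l // f_mono.
- have [b [b0 ba fb]] := f_lc a a0 a1 (e / k) (divr_gt0 e0 k_gt0).
  exists b; split => //.
  have : k * (f a - e / k) < k * f b by rewrite ltr_pM2l.
  by rewrite mulrBr mulrCA divff ?gt_eqF // mulr1.
- have [b [b0 b1 fb]] := f_rc (e / k) (divr_gt0 e0 k_gt0).
  exists b; split => //.
  have : k * f b < k * (f 0 + e / k) by rewrite ltr_pM2l.
  by rewrite mulrDr mulrCA divff ?gt_eqF // mulr1.
Qed.

Lemma level_endpoints_ext L U L' U' :
    (forall a, 0 <= a -> a <= 1 -> L a = L' a /\ U a = U' a) ->
  level_endpoints L U -> level_endpoints L' U'.
Proof.
move=> LU' [L_end U_end LleU]; split.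
- by apply: level_endpoint_ext L_end => a a0 a1; case: (LU' a a0 a1).
- by apply: level_endpoint_ext U_end => a a0 a1; case: (LU' a a0 a1) => _ ->.
- by move=> a a0 a1; case: (LU' a a0 a1) => <- <-; exact: LleU.
Qed.

End LevelEndpoints.

Section FromLevels.
Variable R : realType.
Variables L U : R -> R.
Hypothesis LU : level_endpoints L U.

Let f := from_levels L U.
Let cut t := [set 0] `|` [set a : R | 0 < a <= 1 /\ L a <= t <= U a].

Lemma from_levels_le1 t : f t <= 1.
Proof. by apply: ge_sup => [|y [->|[/andP[_ ->]]]]; [exists 0; left | rewrite ler01 |]. Qed.

Lemma from_levels_geP t a : 0 < a -> a <= 1 -> a <= f t <-> L a <= t <= U a.
Proof.
have [[L_mono L_lc _] [U_mono U_lc _] _] := LU.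
have cut_ub : has_ubound (cut t) by exists 1 => y [->|[/andP[_ ->]]] //; rewrite ler01.
move=> a0 a1; split => [ft|Lta]; last by apply: (ub_le_sup cut_ub); right; split => //; rewrite a0.
have below b : 0 <= b -> b < a -> L b <= t /\ t <= U b.
  move=> b0 ba; have [c cutc bc] := sup_gt (ex_intro _ 0 (or_introl erefl)) (lt_le_trans ba ft).
  case: cutc bc => [->|[/andP[c0 c1] /andP[Lc Uc]] bc]; first lra.
  have := L_mono b c b0 (ltW bc) c1; have := U_mono b c b0 (ltW bc) c1; rewrite /=; lra.
apply/andP; split; apply/ler_addgt0Pr => e e0.
  by have [b [b0 ba Lb]] := L_lc a a0 a1 e e0; have := below b b0 ba; lra.
by have [b [b0 ba Ub]] := U_lc a a0 a1 e e0; have := below b b0 ba; rewrite /= in Ub; lra.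
Qed.

Lemma lo_from_levels a : 0 <= a -> a <= 1 -> lo f a = L a.
Proof.
have [[L_mono _ L_rc] _ LleU] := LU.
move=> a0 a1; rewrite /lo /level; have [->|a_neq0] := eqVneq a 0; last first.
  have a_gt0 : 0 < a by rewrite lt_neqAle eq_sym a_neq0.
  apply: inf_minimum => [|y /(from_levels_geP _ a_gt0 a1) /andP[] //].
  by apply/(from_levels_geP _ a_gt0 a1); rewrite lexx LleU.
apply: inf_minimum => [B /nbhs_distP[e e0 eB]|y y_supp].
  have [b [b0 b1 Lb]] := L_rc e e0.
  exists (L b); split.
    by apply: (lt_le_trans b0); apply/(from_levels_geP _ b0 b1); rewrite lexx LleU // ltW.
  by apply: eB; have L0b := L_mono 0 b (lexx _) (ltW b0) b1; rewrite ler0_norm ?subr_le0 //; lra.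
rewrite leNgt; apply/negP => yL.
have yL' : 0 < L 0 - y by rewrite subr_gt0.
have [s [fs_gt0 ys]] := y_supp _ (nbhs_dist_lt y yL').
have /andP[Ls _] := (from_levels_geP s fs_gt0 (from_levels_le1 s)).1 (lexx _).
have := L_mono 0 _ (lexx _) (ltW fs_gt0) (from_levels_le1 s).
have := ler_norm (s - y); rewrite distrC /= in ys; lra.
Qed.

Lemma hi_from_levels a : 0 <= a -> a <= 1 -> hi f a = U a.
Proof.
have [_ [U_mono _ U_rc] LleU] := LU.
move=> a0 a1; rewrite /hi /level; have [->|a_neq0] := eqVneq a 0; last first.
  have a_gt0 : 0 < a by rewrite lt_neqAle eq_sym a_neq0.
  apply: sup_maximum => [|y /(from_levels_geP _ a_gt0 a1) /andP[] //].
  by apply/(from_levels_geP _ a_gt0 a1); rewrite lexx LleU.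
apply: sup_maximum => [B /nbhs_distP[e e0 eB]|y y_supp].
  have [b [b0 b1 Ub]] := U_rc e e0.
  exists (U b); split.
    by apply: (lt_le_trans b0); apply/(from_levels_geP _ b0 b1); rewrite lexx LleU // ltW.
  apply: eB; have Ub0 := U_mono 0 b (lexx _) (ltW b0) b1.
  by rewrite /= in Ub Ub0; rewrite ger0_norm ?subr_ge0; lra.
rewrite leNgt; apply/negP => Uy.
have Uy' : 0 < y - U 0 by rewrite subr_gt0.
have [s [fs_gt0 ys]] := y_supp _ (nbhs_dist_lt y Uy').
have /andP[_ sU] := (from_levels_geP s fs_gt0 (from_levels_le1 s)).1 (lexx _).
have := U_mono 0 _ (lexx _) (ltW fs_gt0) (from_levels_le1 s).
have := ler_norm (y - s); rewrite /= in ys *; lra.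
Qed.

Lemma regular_from_levels : regular_levels f.
Proof.
apply: level_endpoints_ext LU => a a0 a1.
by rewrite lo_from_levels ?hi_from_levels.
Qed.

End FromLevels.

Section Superlevel.
Variable R : realType.
Implicit Types v : R -> R.

Lemma usc_ge_near v l a : (forall e, 0 < e -> \forall s \near l, v s < v l + e) ->
    (forall dl eta, 0 < dl -> 0 < eta -> exists t, `|l - t| < dl /\ a - eta <= v t) ->
  a <= v l.
Proof.
move=> v_usc near_l; rewrite leNgt; apply/negP => vl_lt.
have eta_gt0 : 0 < (a - v l) / 2 by rewrite divr_gt0 // subr_gt0.
have [dl dl_gt0 dl_v] := nbhs_distP (v_usc _ eta_gt0).
have [t [lt vt]] := near_l dl _ dl_gt0 eta_gt0.
by have := dl_v t lt; rewrite /=; lra.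
Qed.

Definition inf_superlevel v b := inf [set t | b <= v t].

Lemma inf_superlevel_le v b c : b <= c -> [set t | c <= v t] !=set0 ->
  has_lbound [set t | b <= v t] -> inf_superlevel v b <= inf_superlevel v c.
Proof.
move=> bc c_ne b_lb; apply: lb_le_inf => // t ct.
by apply: (ge_inf b_lb); exact: le_trans ct.
Qed.

Lemma inf_superlevel_left_cont v a e :
    (forall t e, 0 < e -> \forall s \near t, v s < v t + e) ->
    (forall b, 0 < b -> b <= 1 -> [set t | b <= v t] !=set0) ->
    (forall b, 0 < b -> b <= 1 -> has_lbound [set t | b <= v t]) ->
    0 < a -> a <= 1 -> 0 < e ->
  exists b, [/\ 0 < b, b < a & inf_superlevel v a - e < inf_superlevel v b].
Proof.
move=> v_usc ne lbd a_gt0 a1 e_gt0.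
have a2_gt0 : 0 < a / 2 by rewrite divr_gt0.
apply: contrapT => no_b.
have le_e b : a / 2 <= b -> b < a -> inf_superlevel v b <= inf_superlevel v a - e.
  move=> a2b ba; rewrite leNgt; apply/negP => lt_e; apply: no_b.
  by exists b; split => //; lra.
pose I := [set inf_superlevel v b | b in [set b | a / 2 <= b < a]].
have I_sup : has_sup I.
  split; first by exists (inf_superlevel v (a / 2)), (a / 2) => //=; rewrite lexx; lra.
  by exists (inf_superlevel v a - e) => _ [b /andP[a2b ba] <-]; exact: le_e.
have sup_le : sup I <= inf_superlevel v a - e.
  by apply: ge_sup; [case: I_sup | move=> _ [b /andP[a2b ba] <-]; exact: le_e].
suff : a <= v (sup I).
  by move=> /(ge_inf (lbd a a_gt0 a1)); rewrite -/(inf_superlevel v a); lra.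
apply: (usc_ge_near (v_usc _)) => dl eta dl_gt0 eta_gt0.
have dl2_gt0 : 0 < dl / 2 by rewrite divr_gt0.
have [_ [b0 /andP[a2b0 b0a] <-] supI_b0] := sup_adherent dl2_gt0 I_sup.
pose b := Num.max b0 (a - eta).
have b0b : b0 <= b by rewrite le_max lexx.
have ab : a - eta <= b by rewrite le_max lexx orbT.
have ba : b < a by rewrite gt_max b0a; lra.
have [b_gt0 b1] : 0 < b /\ b <= 1 by split; lra.
have Ib : inf_superlevel v b <= sup I.
  by apply: (ub_le_sup (proj2 I_sup)); exists b => //=; rewrite ba andbT; lra.
have [t vt tb] := inf_adherent dl2_gt0 (conj (ne b b_gt0 b1) (lbd b b_gt0 b1)).
have bt : inf_superlevel v b <= t := ge_inf (lbd b b_gt0 b1) vt.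
have := inf_superlevel_le b0b (ne b b_gt0 b1) (lbd b0 (lt_le_trans a2_gt0 a2b0) (le_trans b0b b1)).
move: tb; rewrite -/(inf_superlevel v b) => tb b0_b.
exists t; split; last exact: le_trans ab vt.
by rewrite ltr_norml; apply/andP; split; lra.
Qed.

End Superlevel.

Section FuzzyLevels.
Variable R : realType.
Variables (u : R -> R) (t1 M : R).
Hypotheses (u_le1 : forall t, u t <= 1) (u_t1 : u t1 = 1)
  (u_usc : forall t e, 0 < e -> \forall s \near t, u s < u t + e)
  (supp_bounded : forall t, closure [set t | 0 < u t] t -> `|t| <= M).

Let supp := closure [set t | 0 < u t].

Lemma levelE (a : R) : a != 0 -> level u a = [set t | a <= u t].
Proof. by rewrite /level => /negbTE ->. Qed.

Lemma level_sub_supp (a : R) : 0 <= a -> level u a `<=` supp.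
Proof.
rewrite /level; case: eqP => [_ _ //|/eqP a_neq0 a0 t /= ut].
by apply: subset_closure; apply: lt_le_trans ut; rewrite lt_neqAle eq_sym a_neq0.
Qed.

Lemma level_t1 (a : R) : 0 <= a -> a <= 1 -> level u a t1.
Proof.
move=> a0 a1; rewrite /level; case: eqP => _ /=; last by rewrite u_t1.
by apply: subset_closure; rewrite /= u_t1.
Qed.

Lemma level_lbound (a : R) : 0 <= a -> has_lbound (level u a).
Proof.
move=> a0; exists (- M) => t /(level_sub_supp a0) /supp_bounded.
by rewrite ler_norml => /andP[].
Qed.

Lemma level_ubound (a : R) : 0 <= a -> has_ubound (level u a).
Proof.
move=> a0; exists M => t /(level_sub_supp a0) /supp_bounded.
by rewrite ler_norml => /andP[].
Qed.

Lemma level_anti (a b : R) : 0 <= a -> a <= b -> level u b `<=` level u a.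
Proof.
move=> a0 ab t; have [->|a_neq0] := eqVneq a 0.
  by move=> bt; rewrite /level eqxx; apply: (level_sub_supp (le_trans a0 ab)).
have b_gt0 : 0 < b by apply: lt_le_trans ab; rewrite lt_neqAle eq_sym a_neq0.
by rewrite (levelE a_neq0) (levelE (lt0r_neq0 b_gt0)) /= => bt; exact: le_trans ab bt.
Qed.

Lemma lo_nondecreasing : nondecreasing01 (lo u).
Proof.
move=> a b a0 ab b1; apply: lb_le_inf; first by exists t1; apply: level_t1 (le_trans a0 ab) b1.
by move=> t bt; apply: (ge_inf (level_lbound a0)); exact: level_anti bt.
Qed.

Lemma hi_nonincreasing : nondecreasing01 (fun a => - hi u a).
Proof.
move=> a b a0 ab b1; rewrite lerN2; apply: ge_sup.
  by exists t1; apply: level_t1 (le_trans a0 ab) b1.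
by move=> t bt; apply: (ub_le_sup (level_ubound a0)); exact: level_anti bt.
Qed.

Lemma lo_le_hi (a : R) : 0 <= a -> a <= 1 -> lo u a <= hi u a.
Proof.
move=> a0 a1; apply: (@le_trans _ _ t1).
  exact: (ge_inf (level_lbound a0) (level_t1 a0 a1)).
exact: (ub_le_sup (level_ubound a0) (level_t1 a0 a1)).
Qed.

Lemma superlevel_bounded b t : 0 < b -> b <= u t -> `|t| <= M.
Proof.
move=> b_gt0 bt; apply/supp_bounded/(level_sub_supp (ltW b_gt0)).
by rewrite levelE ?lt0r_neq0.
Qed.

Lemma lo_left_continuous : left_continuous01 (lo u).
Proof.
move=> a a_gt0 a1 e e_gt0.
have [|b b_gt0 _|b [b_gt0 ba]] := inf_superlevel_left_cont u_usc _ _ a_gt0 a1 e_gt0.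
- by move=> b _ b1; exists t1; rewrite /= u_t1.
- by exists (- M) => t /(superlevel_bounded b_gt0); rewrite ler_norml => /andP[].
by exists b; rewrite /lo !levelE ?lt0r_neq0 // ltW.
Qed.

Lemma hi_left_continuous : left_continuous01 (fun a => - hi u a).
Proof.
pose v t := u (- t).
have v_usc t e : 0 < e -> \forall s \near t, v s < v t + e.
  move=> e_gt0; have [dl dl_gt0 dl_u] := nbhs_distP (u_usc (- t) e_gt0).
  by apply/nbhs_ballP; exists dl => // s /= ts; apply: dl_u; rewrite -normrN opprD !opprK.
have infvE b : 0 < b -> inf_superlevel v b = - hi u b.
  move=> b_gt0; rewrite /inf_superlevel /inf /hi levelE ?lt0r_neq0 //; congr (- sup _).
  apply/seteqP; split => x /=; first by move=> [y vy <-].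
  by move=> ux; exists (- x); rewrite /v /= ?opprK.
move=> a a_gt0 a1 e e_gt0.
have [|b b_gt0 _|b [b_gt0 ba]] := inf_superlevel_left_cont v_usc _ _ a_gt0 a1 e_gt0.
- by move=> b _ b1; exists (- t1); rewrite /= /v opprK u_t1.
- exists (- M) => t /(superlevel_bounded b_gt0).
  by rewrite normrN ler_norml lerNl => /andP[].
by exists b; rewrite -!infvE // ltW.
Qed.

Lemma supp_inf_sup : has_inf supp /\ has_sup supp.
Proof.
have supp_t1 : supp t1 by apply: subset_closure; rewrite /= u_t1.
split; split; try by exists t1.
  by exists (- M) => t /supp_bounded; rewrite ler_norml => /andP[].
by exists M => t /supp_bounded; rewrite ler_norml => /andP[].
Qed.

Lemma lo_right_continuous0 : right_continuous0 (lo u).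
Proof.
move=> e e_gt0; have e2_gt0 : 0 < e / 2 by rewrite divr_gt0.
have [t supp_t t_lt] := inf_adherent e2_gt0 supp_inf_sup.1.
have [s [us_gt0 ts]] := supp_t _ (nbhs_dist_lt t e2_gt0).
exists (u s); split => //.
have lo_s : lo u (u s) <= s.
  by apply: (ge_inf (level_lbound (ltW us_gt0))); rewrite levelE ?lt0r_neq0 //=.
have lo0 : lo u 0 = inf supp by rewrite /lo /level eqxx.
by have := ler_norm (s - t); rewrite distrC /= in ts; lra.
Qed.

Lemma hi_right_continuous0 : right_continuous0 (fun a => - hi u a).
Proof.
move=> e e_gt0; have e2_gt0 : 0 < e / 2 by rewrite divr_gt0.
have [t supp_t t_gt] := sup_adherent e2_gt0 supp_inf_sup.2.
have [s [us_gt0 ts]] := supp_t _ (nbhs_dist_lt t e2_gt0).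
exists (u s); split => //.
have hi_s : s <= hi u (u s).
  by apply: (ub_le_sup (level_ubound (ltW us_gt0))); rewrite levelE ?lt0r_neq0 //=.
have hi0 : hi u 0 = sup supp by rewrite /hi /level eqxx.
by have := ler_norm (t - s); rewrite /= in ts; lra.
Qed.

Lemma regular_levels_of_bounded : regular_levels u.
Proof.
split; [split | split | exact: lo_le_hi].
- exact: lo_nondecreasing.
- exact: lo_left_continuous.
- exact: lo_right_continuous0.
- exact: hi_nonincreasing.
- exact: hi_left_continuous.
- exact: hi_right_continuous0.
Qed.

End FuzzyLevels.

Lemma fuzzy_regular (R : realType) (u : R -> R) : is_fuzzy u -> regular_levels u.
Proof.
case=> u01 [t1 u_t1] _ u_usc /compact_norm_bounded[M supp_M].
apply: (@regular_levels_of_bounded _ _ t1 M) => // t.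
by have /andP[] := u01 t.
Qed.

Section FuzzyArithmetic.
Variable R : realType.
Implicit Types (x y : R -> R) (a : R).

Definition endpoint (upper : bool) x a := if upper then hi x a else lo x a.

Lemma endpoint_norm_le x b a : regular_levels x -> 0 <= a -> a <= 1 ->
  `|endpoint b x a| <= `|lo x 0| + `|hi x 0|.
Proof.
move=> [[lo_mono _ _] [hi_mono _ _] lo_hi] a0 a1.
have := lo_mono 0 a (lexx _) a0 a1; have := hi_mono 0 a (lexx _) a0 a1.
have := lo_hi a a0 a1; rewrite /=.
have /andP[] : - `|lo x 0| <= lo x 0 <= `|lo x 0| by rewrite -ler_norml.
have /andP[] : - `|hi x 0| <= hi x 0 <= `|hi x 0| by rewrite -ler_norml.
by case: b; rewrite /= ler_norml; lra.
Qed.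

Lemma endpoint_dist_le_fdist x y b a : regular_levels x -> regular_levels y ->
  0 <= a -> a <= 1 -> `|endpoint b x a - endpoint b y a| <= fdist x y.
Proof.
move=> x_reg y_reg a0 a1.
have ub : has_ubound [set z | exists a, 0 <= a <= 1 /\
    z = Num.max `|lo x a - lo y a| `|hi x a - hi y a|].
  exists ((`|lo x 0| + `|hi x 0|) + (`|lo y 0| + `|hi y 0|)) => _ [c [/andP[c0 c1] ->]].
  by rewrite ge_max; apply/andP; split; apply: (le_trans (ler_normB _ _));
    apply: lerD; [exact: (@endpoint_norm_le x false) | exact: (@endpoint_norm_le y false)
                 |exact: (@endpoint_norm_le x true) | exact: (@endpoint_norm_le y true)].
apply: le_trans (ub_le_sup ub (ex_intro _ a (conj _ erefl))); last by rewrite a0.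
by case: b; rewrite le_max lexx ?orbT.
Qed.

Lemma fdist_le x y (eps : R) :
    (forall b a, 0 <= a -> a <= 1 -> `|endpoint b x a - endpoint b y a| <= eps) ->
  fdist x y <= eps.
Proof.
move=> xy_eps; apply: ge_sup.
  by exists (Num.max `|lo x 0 - lo y 0| `|hi x 0 - hi y 0|), 0; rewrite lexx ler01.
move=> _ [a [/andP[a0 a1] ->]].
by rewrite ge_max (xy_eps false) ?(xy_eps true).
Qed.

Lemma fdist_ge0 x y : regular_levels x -> regular_levels y -> 0 <= fdist x y.
Proof.
move=> x_reg y_reg; apply: le_trans (endpoint_dist_le_fdist false x_reg y_reg (lexx 0) ler01).
exact: normr_ge0.
Qed.

Lemma fzeroE : @fzero R = from_levels (fun=> 0) (fun=> 0).
Proof.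
apply: funext => t; rewrite /fzero /from_levels; case: eqP => [->|t_neq0].
- apply/esym/sup_maximum; first by right; split; rewrite /= ?lexx ?ltr01.
  by move=> y [->|[/andP[_ ->]]] //; rewrite ler01.
- apply/esym/sup_maximum; first by left.
  move=> y [->|[_ /andP[t_ge0 t_le0]]] //.
  by exfalso; apply: t_neq0; apply/eqP; rewrite eq_le t_le0 t_ge0.
Qed.

Lemma level_endpoints0 : level_endpoints (fun=> 0 : R) (fun=> 0).
Proof. by split; [exact: level_endpoint_cst | exact: level_endpoint_cst |]. Qed.

Lemma regular_fzero : regular_levels (@fzero R).
Proof. by rewrite fzeroE; exact: regular_from_levels level_endpoints0. Qed.

Lemma endpoint_fzero b a : 0 <= a -> a <= 1 -> endpoint b (@fzero R) a = 0.
Proof.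
by move=> a0 a1; rewrite fzeroE; case: b; rewrite /= ?lo_from_levels ?hi_from_levels //;
  exact: level_endpoints0.
Qed.

Section Operations.
Variables x y : R -> R.
Hypotheses (x_reg : regular_levels x) (y_reg : regular_levels y).

Lemma level_endpoints_add :
  level_endpoints (fun a => lo x a + lo y a) (fun a => hi x a + hi y a).
Proof.
have [[lox hix lohix] [loy hiy lohiy]] := (x_reg, y_reg); split.
- exact: level_endpointD.
- by apply: level_endpoint_ext (level_endpointD hix hiy) => a _ _; rewrite opprD.
- by move=> a a0 a1; apply: lerD; [exact: lohix | exact: lohiy].
Qed.

Lemma regular_fadd : regular_levels (fadd x y).
Proof. exact: regular_from_levels level_endpoints_add. Qed.

Lemma endpoint_fadd b a : 0 <= a -> a <= 1 ->
  endpoint b (fadd x y) a = endpoint b x a + endpoint b y a.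
Proof.
move=> a0 a1; case: b; rewrite /= /fadd.
  exact: (hi_from_levels level_endpoints_add a0 a1).
exact: (lo_from_levels level_endpoints_add a0 a1).
Qed.

Variable k : R.
Hypothesis k_ge0 : 0 <= k.

Lemma scale_endpointsE a : 0 <= a -> a <= 1 ->
  Num.min (k * lo x a) (k * hi x a) = k * lo x a /\
  Num.max (k * lo x a) (k * hi x a) = k * hi x a.
Proof.
have [_ _ lohi] := x_reg; move=> a0 a1.
have kx : k * lo x a <= k * hi x a by rewrite ler_wpM2l ?lohi.
by split; [apply/min_idPl | apply/max_idPr].
Qed.

Lemma level_endpoints_scale : level_endpoints
  (fun a => Num.min (k * lo x a) (k * hi x a)) (fun a => Num.max (k * lo x a) (k * hi x a)).
Proof.
have [lox hix lohix] := x_reg.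
apply: (level_endpoints_ext (L := fun a => k * lo x a) (U := fun a => k * hi x a)).
  by move=> a a0 a1; have [-> ->] := scale_endpointsE a0 a1.
split; first exact: level_endpointZ.
  by apply: level_endpoint_ext (level_endpointZ k_ge0 hix) => a _ _ /=; rewrite mulrN.
by move=> a a0 a1; rewrite ler_wpM2l ?lohix.
Qed.

Lemma regular_fscale : regular_levels (fscale k x).
Proof. exact: regular_from_levels level_endpoints_scale. Qed.

Lemma endpoint_fscale b a : 0 <= a -> a <= 1 ->
  endpoint b (fscale k x) a = k * endpoint b x a.
Proof.
move=> a0 a1; have [kmin kmax] := scale_endpointsE a0 a1.
case: b; rewrite /= /fscale.
  by rewrite (hi_from_levels level_endpoints_scale).
by rewrite (lo_from_levels level_endpoints_scale).
Qed.

End Operations.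

Lemma regular_fsum (F : nat -> R -> R) n :
  (forall i, regular_levels (F i)) -> regular_levels (fsum F n).
Proof. by move=> F_reg; elim: n => [|n IHn] //=; exact: regular_fadd. Qed.

Lemma endpoint_fsum (F : nat -> R -> R) n b a :
    (forall i, regular_levels (F i)) -> 0 <= a -> a <= 1 ->
  endpoint b (fsum F n) a = \sum_(i < n.+1) endpoint b (F i) a.
Proof.
move=> F_reg a0 a1; elim: n => [|n IHn]; first by rewrite big_ord1.
by rewrite big_ord_recr /= endpoint_fadd ?IHn //; exact: regular_fsum.
Qed.

End FuzzyArithmetic.

Section FuzzyEulerMeans.
Variable R : realType.
Variables (p : R) (u : nat -> R -> R).
Hypotheses (p_ge0 : 0 <= p) (u_reg : forall j, regular_levels (u j)).

Let coef_ge0 n k : 0 <= 'C(n, k)%:R * p ^+ (n - k).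
Proof. by rewrite mulr_ge0 ?exprn_ge0. Qed.

Let term_reg n k : regular_levels (fscale ('C(n, k)%:R * p ^+ (n - k)) (partial_sum u k)).
Proof. exact: (regular_fscale (regular_fsum _ u_reg) (coef_ge0 n k)). Qed.

Let norm_ge0 n : 0 <= ((p + 1) ^+ n)^-1.
Proof. by rewrite invr_ge0 exprn_ge0 ?addr_ge0. Qed.

Lemma regular_euler_mean n : regular_levels (euler_mean p u n).
Proof. exact: (regular_fscale (regular_fsum _ (term_reg n)) (norm_ge0 n)). Qed.

Lemma endpoint_euler_mean n b a : 0 <= a -> a <= 1 ->
  endpoint b (euler_mean p u n) a = euler_avg p (psum (fun j => endpoint b (u j) a)) n.
Proof.
move=> a0 a1; rewrite /euler_mean (endpoint_fscale (regular_fsum _ (term_reg n))) //.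
rewrite endpoint_fsum //; congr (_ * _); apply: eq_bigr => k _.
by rewrite (endpoint_fscale (regular_fsum _ u_reg)) ?coef_ge0 // endpoint_fsum.
Qed.

End FuzzyEulerMeans.

Theorem mainTheorem5 (R : realType) (p : R) (u : nat -> R -> R) (nu : R -> R) :
  0 < p ->
  (forall n, is_fuzzy (u n)) ->
  is_fuzzy nu ->
  (fun n => fdist (euler_mean p u n) nu) @ \oo --> 0 ->
  (fun n => Num.sqrt (n%:R) * fdist (u n) (@fzero R)) @ \oo --> 0 ->
  (fun n => fdist (partial_sum u n) nu) @ \oo --> 0.
Proof.
move=> /ltW p_ge0 u_fuzzy /fuzzy_regular nu_reg euler_nu sqrt_u.
have u_reg j := fuzzy_regular (u_fuzzy j).
have d_ge0 j : 0 <= fdist (u j) (@fzero R) := fdist_ge0 (u_reg j) (regular_fzero R).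
apply/cvgrPdist_le => eps eps_gt0.
have [N tauber] := euler_tauberian_uniform p_ge0 d_ge0 euler_nu sqrt_u eps_gt0.
exists N => // m /tauber {}tauber.
have sm_reg : regular_levels (partial_sum u m) := regular_fsum m u_reg.
rewrite sub0r normrN ger0_norm ?fdist_ge0 //.
apply: fdist_le => b a a0 a1; rewrite endpoint_fsum //; apply: (tauber (fun j => endpoint b (u j) a)) => [j|n].
  rewrite -[endpoint b (u j) a]subr0 -(endpoint_fzero b a0 a1).
  exact: endpoint_dist_le_fdist (u_reg j) (regular_fzero R) a0 a1.
rewrite -endpoint_euler_mean //.
exact: endpoint_dist_le_fdist (regular_euler_mean p_ge0 u_reg n) nu_reg a0 a1.
Qed.
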